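(* Let $\mathbf{G}$ be a group (possibly non-commutative) with identity $1_{\mathbf{G}}$, and let $f:W\to\mathbf{G}$ be a $\mathbf{G}$-valued reciprocity function. For $(p,q)\in W$, choose integers $a_0,\dots,a_n$ ($n\ge 0$) with $$q=Q^{(n)}(a_0,\dots,a_n),\qquad p=P^{(n)}(a_0,\dots,a_n),$$ for $i=1,\dots,n$ put $q_i:=Q^{(n-i)}(a_i,\dots,a_n)$, $p_i:=P^{(n-i)}(a_i,\dots,a_n)$, and define $$\mathcal{D}(p,q):=f(p_1,q_1)^{-1}f(p_2,q_2)^{-1}\cdots f(p_n,q_n)^{-1}\in\mathbf{G}$$ (the empty product, for $n=0$, being $1_{\mathbf{G}}$). Then: (i) $\mathcal{D}(p,q)$ depends only on $(p,q)$ and not on the choice of the sequence $(a_0,\dots,a_n)$; (ii) the function $\mathcal{D}:W\to\mathbf{G}$ thus defined is a generalized $\mathbf{G}$-valued Dedekind symbol with reciprocity function $f$.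
   Context: $W:=\{(p,q)\in\mathbb{Z}\times\mathbb{Z} : \gcd(p,q)=1\}$. A $\mathbf{G}$-valued reciprocity function is a map $f:W\to\mathbf{G}$ such that for all relevant $(p,q)$: $f(p,-q)=f(-p,q)$; $f(p,q)f(-q,p)=1_{\mathbf{G}}$; and $f(p,p+q)f(p+q,q)=f(p,q)$. Given such $f$, a generalized $\mathbf{G}$-valued Dedekind symbol with reciprocity function $f$ is a map $\mathcal{D}:W\to\mathbf{G}$ such that $\mathcal{D}(p,q)=\mathcal{D}(p,q+p)$, $\mathcal{D}(p,-q)=\mathcal{D}(-p,q)$, and $\mathcal{D}(p,q)\mathcal{D}(q,-p)^{-1}=f(p,q)$ for all $(p,q)\in W$. The polynomials $Q^{(n)},P^{(n)}\in\mathbb{Z}[A_0,\dots,A_n]$ in commuting variables are defined inductively by $Q^{(0)}(A_0)=A_0$, $P^{(0)}(A_0)=1$, and $Q^{(n+1)}(A_0,\dots,A_{n+1})=A_0Q^{(n)}(A_1,\dots,A_{n+1})-P^{(n)}(A_1,\dots,A_{n+1})$, $P^{(n+1)}(A_0,\dots,A_{n+1})=Q^{(n)}(A_1,\dots,A_{n+1})$; thus $Q^{(n)}/P^{(n)}$ is the continued fraction $A_0-\cfrac{1}{A_1-\cfrac{1}{\ddots-\cfrac{1}{A_n}}}$. The paper assumes every $(p,q)\in W$ admits such a presentation $(a_0,\dots,a_n)$. *)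

From Stdlib Require Import ZArith List.
Open Scope Z_scope.

Record Group := {
  carrier :> Type;
  gmul : carrier -> carrier -> carrier;
  gone : carrier;
  ginv : carrier -> carrier;
  gmulA : forall x y z, gmul x (gmul y z) = gmul (gmul x y) z;
  gmul1x : forall x, gmul gone x = x;
  gmulx1 : forall x, gmul x gone = x;
  gmulVx : forall x, gmul (ginv x) x = gone;
  gmulxV : forall x, gmul x (ginv x) = gone
}.

Definition inW (p q : Z) : Prop := Z.gcd p q = 1.

(* A G-valued reciprocity function f : W -> G (given as a function on Z*Z,
   only its values on W matter). *)
Definition is_reciprocity_function (G : Group) (f : Z -> Z -> G) : Prop :=
  forall p q, inW p q ->
    f p (- q) = f (- p) q /\
    gmul G (f p q) (f (- q) p) = gone G /\
    gmul G (f p (p + q)) (f (p + q) q) = f p q.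

Definition is_gen_Dedekind_symbol (G : Group) (f D : Z -> Z -> G) : Prop :=
  forall p q, inW p q ->
    D p q = D p (q + p) /\
    D p (- q) = D (- p) q /\
    gmul G (D p q) (ginv G (D q (- p))) = f p q.

(* cfQP [a_0; ...; a_n] = (Q^(n)(a_0..a_n), P^(n)(a_0..a_n)).
   The base value on the empty list, (1, 0), makes the recursion
   Q^(n+1)(a::l) = a Q^(n)(l) - P^(n)(l), P^(n+1)(a::l) = Q^(n)(l)
   uniform, and gives Q^(0)(a) = a, P^(0)(a) = 1 as required. *)
Fixpoint cfQP (l : list Z) : Z * Z :=
  match l with
  | nil => (1, 0)
  | a :: l' => let (Q, P) := cfQP l' in (a * Q - P, Q)
  end.

Definition cfQ (l : list Z) : Z := fst (cfQP l).
Definition cfP (l : list Z) : Z := snd (cfQP l).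

(* For l = [a_1; ...; a_n]: the product
   f(p_1,q_1)^-1 f(p_2,q_2)^-1 ... f(p_n,q_n)^-1,
   with q_i = Q^(n-i)(a_i..a_n), p_i = P^(n-i)(a_i..a_n);
   empty product = 1. *)
Fixpoint inv_prod (G : Group) (f : Z -> Z -> G) (l : list Z) : G :=
  match l with
  | nil => gone G
  | a :: l' => gmul G (ginv G (f (cfP (a :: l')) (cfQ (a :: l')))) (inv_prod G f l')
  end.

Definition D_of_seq (G : Group) (f : Z -> Z -> G) (a0 : Z) (l : list Z) : G :=
  inv_prod G f l.

(* Both parts follow from exhibiting one function [dedekind f] on W, defined
   without continued fractions, that satisfies the laws of a Dedekind symbol.
   It is the Euclidean algorithm: reduce q modulo p, then use
   D(n, r) = f(n, r) D(r, -n) for 0 < r < n.  Reciprocity is proved for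
   0 < x, 0 <= y by subtractive Euclid, the third axiom of f passing from
   (x, y - x) to (x, y), and carried to the other quadrants by the rotation
   (a, b) |-> (b, -a), which the second axiom of f makes compatible with
   reciprocity.  Peeling off a_1 then shows that the product of the
   f(p_i, q_i)^-1 equals [dedekind f] at the pair presented by a_0, ..., a_n. *)
From Stdlib Require Import ZArith List Lia.
Open Scope Z_scope.

Lemma gmul_cancel_r (G : Group) (x y z : G) : gmul G y x = gmul G z x -> y = z.
Proof.
  intros H.
  rewrite <- (gmulx1 G y), <- (gmulx1 G z), <- (gmulxV G x), !gmulA, H.
  reflexivity.
Qed.

Section CanonicalSymbol.

Variables (G : Group) (f : Z -> Z -> G).

(* [dedekind_iter k n r] computes D(n, r) for 0 <= r < n (or n = 0) within
   [k] Euclidean steps.  The value D(0, _) = f(1, 0)^-1 is forced by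
   reciprocity at (1, 0) together with D(1, _) = 1. *)
Fixpoint dedekind_iter (k : nat) (n r : Z) : G :=
  match k with
  | O => gone G
  | S k' =>
    if Z.eqb n 0 then ginv G (f 1 0)
    else if Z.eqb r 0 then gone G
    else gmul G (f n r) (dedekind_iter k' r ((- n) mod r))
  end.

Definition dedekind (p q : Z) : G :=
  dedekind_iter (S (Z.to_nat (Z.abs p))) (Z.abs p) ((Z.sgn p * q) mod Z.abs p).

Lemma dedekind_iter_fuel k k' n r :
  (Z.to_nat n < k)%nat -> (Z.to_nat n < k')%nat ->
  0 <= n -> 0 <= r -> (r < n \/ n = 0) ->
  dedekind_iter k n r = dedekind_iter k' n r.
Proof.
  revert k' n r.
  induction k as [|k IHk]; intros [|k'] n r Hk Hk' Hn Hr Hrn; try lia; simpl.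
  destruct (Z.eqb_spec n 0); auto.
  destruct (Z.eqb_spec r 0); auto.
  pose proof (Z.mod_pos_bound (- n) r ltac:(lia)).
  f_equal. apply IHk; lia.
Qed.

Lemma dedekind_unfold n r :
  0 < r < n -> dedekind n r = gmul G (f n r) (dedekind r (- n)).
Proof.
  intros Hrn. unfold dedekind.
  rewrite (Z.abs_eq n), (Z.abs_eq r), (Z.sgn_pos n), (Z.sgn_pos r) by lia.
  rewrite !Z.mul_1_l, (Z.mod_small r n) by lia.
  pose proof (Z.mod_pos_bound (- n) r ltac:(lia)).
  transitivity (gmul G (f n r) (dedekind_iter (Z.to_nat n) r ((- n) mod r))).
  - cbn [dedekind_iter].
    destruct (Z.eqb_spec n 0); [lia|]. destruct (Z.eqb_spec r 0); [lia|].
    reflexivity.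
  - f_equal. apply dedekind_iter_fuel; lia.
Qed.

Lemma dedekind_periodic p q k : dedekind p (q + k * p) = dedekind p q.
Proof.
  unfold dedekind. f_equal.
  destruct (Z.eq_dec p 0) as [->|Hp]; [reflexivity|].
  replace (Z.sgn p * (q + k * p)) with (Z.sgn p * q + k * Z.abs p)
    by (destruct (Z_lt_le_dec 0 p);
        [rewrite Z.sgn_pos, Z.abs_eq | rewrite Z.sgn_neg, Z.abs_neq]; lia).
  apply Z.mod_add; lia.
Qed.

Lemma dedekind_periodic_eq p q q' k : q' = q + k * p -> dedekind p q' = dedekind p q.
Proof. intros ->; apply dedekind_periodic. Qed.

Lemma dedekind_opp p q : dedekind (- p) (- q) = dedekind p q.
Proof.
  unfold dedekind. rewrite Z.abs_opp, Z.sgn_opp.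
  replace (- Z.sgn p * - q) with (Z.sgn p * q) by ring.
  reflexivity.
Qed.

Lemma dedekind_1 q : dedekind 1 q = gone G.
Proof. unfold dedekind. change (Z.abs 1) with 1. rewrite Z.mod_1_r. reflexivity. Qed.

Lemma dedekind_0 q : dedekind 0 q = ginv G (f 1 0).
Proof. reflexivity. Qed.

End CanonicalSymbol.

Lemma inW_rot a b : inW a b -> inW b (- a).
Proof. unfold inW. rewrite Z.gcd_opp_r, Z.gcd_comm. auto. Qed.

Lemma inW_add_mul p q k : inW p q -> inW p (q + k * p).
Proof. unfold inW. rewrite Z.gcd_add_mult_diag_r. auto. Qed.

Lemma nonzero_first_quadrant_rot x y :
  (x, y) <> (0, 0) ->
  exists a b, 0 < a /\ 0 <= b /\
    ((x, y) = (a, b) \/ (x, y) = (b, - a) \/ (x, y) = (- a, - b) \/ (x, y) = (- b, a)).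
Proof.
  intros Hxy.
  destruct (Z_lt_le_dec 0 x), (Z_lt_le_dec y 0).
  - exists (- y), x. repeat split; try lia. right; left. f_equal; lia.
  - exists x, y. auto.
  - destruct (Z.eq_dec x 0) as [->|].
    + exists (- y), 0. repeat split; try lia. right; left. f_equal; lia.
    + exists (- x), (- y). repeat split; try lia. right; right; left. f_equal; lia.
  - destruct (Z.eq_dec y 0) as [->|].
    + destruct (Z.eq_dec x 0) as [->|]; [congruence|].
      exists (- x), 0. repeat split; try lia. right; right; left. f_equal; lia.
    + exists y, (- x). repeat split; try lia. right; right; right. f_equal; lia.
Qed.

Section Reciprocity.

Variables (G : Group) (f : Z -> Z -> G).
Hypothesis Hf : is_reciprocity_function G f.

Definition reciprocal_at (x y : Z) : Prop :=
  dedekind G f x y = gmul G (f x y) (dedekind G f y (- x)).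

Lemma reciprocal_at_rot a b : inW a b -> reciprocal_at a b -> reciprocal_at b (- a).
Proof.
  unfold reciprocal_at. intros HW H.
  destruct (Hf b (- a) (inW_rot a b HW)) as [_ [Hinv _]].
  rewrite Z.opp_involutive in Hinv.
  rewrite dedekind_opp, H, gmulA, Hinv, gmul1x. reflexivity.
Qed.

Lemma reciprocal_at_add a b :
  inW a b -> reciprocal_at a b -> reciprocal_at (a + b) b -> reciprocal_at a (a + b).
Proof.
  unfold reciprocal_at. intros HW Hab Hsum.
  destruct (Hf a b HW) as [_ [_ Hsplit]].
  rewrite (dedekind_periodic_eq G f (a + b) (- a) b 1) in Hsum by ring.
  rewrite (dedekind_periodic_eq G f b (- a) (- (a + b)) (-1)) in Hsum by ring.
  rewrite (dedekind_periodic_eq G f a b (a + b) 1) by ring.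
  rewrite Hab, <- Hsplit, <- gmulA, Hsum. reflexivity.
Qed.

Lemma f_1_1 : f 1 1 = gone G.
Proof.
  destruct (Hf 1 0 eq_refl) as [_ [_ H]]. simpl in H.
  apply (gmul_cancel_r G (f 1 0)). rewrite gmul1x. exact H.
Qed.

Lemma reciprocal_at_first_quadrant x y : 0 < x -> 0 <= y -> inW x y -> reciprocal_at x y.
Proof.
  intros Hx Hy. revert x Hx. pattern y. revert y Hy.
  apply Zlt_0_ind. intros y IH Hy x Hx HW.
  destruct (Z.eq_dec y 0) as [->|Hy0].
  { unfold inW in HW. rewrite Z.gcd_0_r, Z.abs_eq in HW by lia. subst x.
    unfold reciprocal_at. rewrite dedekind_1, dedekind_0, gmulxV. reflexivity. }
  destruct (Z_lt_le_dec y x).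
  { apply dedekind_unfold. lia. }
  destruct (Z.eq_dec x y) as [<-|].
  { unfold inW in HW. rewrite Z.gcd_diag, Z.abs_eq in HW by lia. subst x.
    unfold reciprocal_at. rewrite !dedekind_1, f_1_1, gmul1x. reflexivity. }
  assert (HW' : inW x (y - x)).
  { replace (y - x) with (y + (-1) * x) by ring. apply inW_add_mul. exact HW. }
  replace y with (x + (y - x)) by ring.
  apply reciprocal_at_add; [exact HW' | apply IH; auto; lia |].
  replace (x + (y - x)) with y by ring.
  apply dedekind_unfold. lia.
Qed.

Lemma reciprocal_at_inW x y : inW x y -> reciprocal_at x y.
Proof.
  intros HW.
  assert (Hxy : (x, y) <> (0, 0)) by (intros E; injection E as -> ->; discriminate).
  destruct (nonzero_first_quadrant_rot x y Hxy) as (a & b & Ha & Hb & Hcases).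
  assert (HWab : inW a b).
  { unfold inW in *.
    destruct Hcases as [E|[E|[E|E]]]; injection E as -> ->;
      rewrite ?Z.gcd_opp_l, ?Z.gcd_opp_r, ?(Z.gcd_comm b a) in HW; exact HW. }
  pose proof (reciprocal_at_first_quadrant a b Ha Hb HWab) as R0.
  pose proof (reciprocal_at_rot a b HWab R0) as R1.
  pose proof (inW_rot a b HWab) as W1.
  pose proof (reciprocal_at_rot _ _ W1 R1) as R2.
  pose proof (inW_rot _ _ W1) as W2.
  pose proof (reciprocal_at_rot _ _ W2 R2) as R3.
  rewrite Z.opp_involutive in R3.
  destruct Hcases as [E|[E|[E|E]]]; injection E as -> ->; assumption.
Qed.

Lemma dedekind_is_gen_Dedekind_symbol : is_gen_Dedekind_symbol G f (dedekind G f).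
Proof.
  intros p q HW. split; [|split].
  - symmetry. apply (dedekind_periodic_eq G f p q (q + p) 1). ring.
  - rewrite <- (dedekind_opp G f (- p) q), Z.opp_involutive. reflexivity.
  - rewrite (reciprocal_at_inW p q HW), <- gmulA, gmulxV, gmulx1. reflexivity.
Qed.

End Reciprocity.

Lemma gen_Dedekind_symbol_ext G f D D' :
  (forall p q, inW p q -> D p q = D' p q) ->
  is_gen_Dedekind_symbol G f D' -> is_gen_Dedekind_symbol G f D.
Proof.
  intros HDD' HD' p q HW.
  assert (W1 : inW p (q + p)) by (rewrite <- (Z.mul_1_l p) at 2; apply inW_add_mul; exact HW).
  assert (W2 : inW p (- q)) by (unfold inW in *; rewrite Z.gcd_opp_r; exact HW).
  assert (W3 : inW (- p) q) by (unfold inW in *; rewrite Z.gcd_opp_l; exact HW).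
  rewrite !HDD' by (auto; apply inW_rot; exact HW).
  apply HD'. exact HW.
Qed.

Lemma cfQ_cons a l : cfQ (a :: l) = a * cfQ l - cfP l.
Proof. unfold cfQ, cfP. simpl. destruct (cfQP l). reflexivity. Qed.

Lemma cfP_cons a l : cfP (a :: l) = cfQ l.
Proof. unfold cfQ, cfP. simpl. destruct (cfQP l). reflexivity. Qed.

Lemma inW_mul_sub q p a : inW q p -> inW q (a * q - p).
Proof.
  unfold inW. replace (a * q - p) with (- p + a * q) by ring.
  rewrite Z.gcd_add_mult_diag_r, Z.gcd_opp_r. auto.
Qed.

Lemma cfQ_cfP_coprime l : inW (cfQ l) (cfP l).
Proof.
  induction l as [|a l IH]; [reflexivity|].
  rewrite cfQ_cons, cfP_cons. unfold inW. rewrite Z.gcd_comm.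
  apply inW_mul_sub. exact IH.
Qed.

Lemma inv_prod_dedekind G f :
  is_reciprocity_function G f ->
  forall l, inv_prod G f l = dedekind G f (cfQ l) (- cfP l).
Proof.
  intros Hf l. induction l as [|a l IH].
  - symmetry. apply dedekind_1.
  - simpl inv_prod. rewrite IH, cfP_cons, cfQ_cons.
    pose proof (inW_mul_sub _ _ a (cfQ_cfP_coprime l)) as HW.
    pose proof (reciprocal_at_inW G f Hf _ _ HW) as R. unfold reciprocal_at in R.
    rewrite (dedekind_periodic_eq G f (cfQ l) (- cfP l) (a * cfQ l - cfP l) a) in R by ring.
    rewrite R, gmulA, gmulVx, gmul1x. reflexivity.
Qed.

Lemma D_of_seq_dedekind G f a0 l :
  is_reciprocity_function G f ->
  D_of_seq G f a0 l = dedekind G f (cfP (a0 :: l)) (cfQ (a0 :: l)).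
Proof.
  intros Hf. unfold D_of_seq.
  rewrite inv_prod_dedekind, cfQ_cons, cfP_cons by exact Hf.
  symmetry. apply (dedekind_periodic_eq G f _ _ _ a0). ring.
Qed.

Theorem theorem1p8 (G : Group) (f : Z -> Z -> G)
  (Hf : is_reciprocity_function G f)
  (Hpres : forall p q, inW p q ->
     exists (a0 : Z) (l : list Z), cfQ (a0 :: l) = q /\ cfP (a0 :: l) = p) :
  (* (i) independence of the chosen presentation *)
  (forall (p q : Z) (a0 : Z) (l : list Z) (b0 : Z) (m : list Z),
      inW p q ->
      cfQ (a0 :: l) = q -> cfP (a0 :: l) = p ->
      cfQ (b0 :: m) = q -> cfP (b0 :: m) = p ->
      D_of_seq G f a0 l = D_of_seq G f b0 m) /\
  (* (ii) the function so defined is a generalized Dedekind symbol *)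
  (forall D : Z -> Z -> G,
      (forall (p q : Z) (a0 : Z) (l : list Z),
          inW p q -> cfQ (a0 :: l) = q -> cfP (a0 :: l) = p ->
          D p q = D_of_seq G f a0 l) ->
      is_gen_Dedekind_symbol G f D).
Proof.
  split.
  - intros p q a0 l b0 m _ Hq Hp Hq' Hp'.
    rewrite !D_of_seq_dedekind by exact Hf.
    rewrite Hq, Hp, Hq', Hp'. reflexivity.
  - intros D HD.
    apply (gen_Dedekind_symbol_ext G f D (dedekind G f));
      [| exact (dedekind_is_gen_Dedekind_symbol G f Hf)].
    intros p q HW. destruct (Hpres p q HW) as (a0 & l & Hq & Hp).
    rewrite (HD p q a0 l HW Hq Hp), D_of_seq_dedekind by exact Hf.
    rewrite Hq, Hp. reflexivity.
Qed.
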